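(* The cofinality of $\mathfrak{hc}$ is uncountable.
   Context: A graph is a pair $(V,E)$ with $E\subseteq[V]^2$; its size is $|V|$. The chromatic number of a graph is the least cardinal $\mu$ admitting a proper coloring $c:V\to\mu$; a graph is uncountably chromatic if its chromatic number is uncountable. A graph $H$ is a minor of $G$ if there are pairwise disjoint non-empty vertex sets $(X_u)_{u\in V_H}$ of $G$, each inducing a connected subgraph, such that for each edge $\{u,v\}$ of $H$ some vertex of $X_u$ is adjacent in $G$ to some vertex of $X_v$. $K_{\omega_1}$ is the complete graph on $\omega_1$ vertices. $\mathfrak{hc}$ denotes the least size of an uncountably chromatic graph with no $K_{\omega_1}$ minor. *)

From Stdlib Require Import Relations Wellfounded.

Record graph := Graph {
  vert : Type;
  adj : vert -> vert -> Prop;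
  adj_sym : forall x y, adj x y -> adj y x;
  adj_irrefl : forall x, ~ adj x x }.

Definition card_le (A B : Type) : Prop := exists f : A -> B, forall x y, f x = f y -> x = y.

Definition countable (A : Type) : Prop := card_le A nat.

Definition proper_coloring (G : graph) (C : Type) (c : vert G -> C) : Prop :=
  forall x y, adj G x y -> c x <> c y.

(* chromatic number uncountable: no proper colouring with a countable set of
   colours, i.e. (every countable cardinal injects into nat) none into nat. *)
Definition uncountably_chromatic (G : graph) : Prop :=
  forall c : vert G -> nat, ~ proper_coloring G nat c.

Definition strict_well_order (W : Type) (R : W -> W -> Prop) : Prop :=
  (forall x, ~ R x x) /\
  (forall x y z, R x y -> R y z -> R x z) /\
  (forall x y, R x y \/ x = y \/ R y x) /\
  well_founded R.

Definition is_omega1 (W : Type) : Prop :=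
  ~ countable W /\
  exists R : W -> W -> Prop, strict_well_order W R /\
    forall w, countable {x : W | R x w}.

Definition connected_in (G : graph) (S : vert G -> Prop) : Prop :=
  forall x y, S x -> S y ->
    clos_refl_trans (vert G) (fun a b => S a /\ S b /\ adj G a b) x y.

Definition has_complete_minor (G : graph) (W : Type) : Prop :=
  exists X : W -> vert G -> Prop,
    (forall w, exists v, X w v) /\
    (forall w w' v, X w v -> X w' v -> w = w') /\
    (forall w, connected_in G (X w)) /\
    (forall w w', w <> w' -> exists x y, X w x /\ X w' y /\ adj G x y).

Definition has_Komega1_minor (G : graph) : Prop :=
  exists W : Type, is_omega1 W /\ has_complete_minor G W.

(* G witnesses the definition of hc: uncountably chromatic, no K_{omega_1} minor *)
Definition hc_candidate (G : graph) : Prop :=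
  uncountably_chromatic G /\ ~ has_Komega1_minor G.

(* The cardinal |V| has uncountable cofinality: in the initial-ordinal
   well-order of V (every proper initial segment of strictly smaller
   cardinality), no countable subset is cofinal. *)
Definition uncountable_cofinality (V : Type) : Prop :=
  exists R : V -> V -> Prop, strict_well_order V R /\
    (forall v, ~ card_le V {x : V | R x v}) /\
    (forall f : nat -> V, ~ (forall v, exists n, R v (f n) \/ v = f n)).

From Stdlib Require Import Relations Wellfounded.
From mathcomp Require Import ssreflect ssrfun ssrbool eqtype ssrnat choice.
From mathcomp Require Import boolp wochoice.

(* Well-order V(G) so that V(G) injects into none of its proper initial
   segments.  A segment then induces a subgraph that is smaller than G and still
   has no K_omega1 minor, so by the minimality of |V(G)| = hc it is countably
   chromatic.  If countably many segments were cofinal, pairing the index of a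
   segment containing v with the colour of v in that segment would properly
   colour G with countably many colours. *)

Section StrictOfWellOrder.

Variables (T : eqType) (R : rel T).
Hypothesis Rwo : well_order R.

Let Rchain : wo_chain R predT.
Proof. by move=> A _; apply: Rwo. Qed.

Let Ranti : antisymmetric R.
Proof. by move=> x y; apply: (wo_chain_antisymmetric Rchain). Qed.

Lemma well_order_transitive : transitive R.
Proof.
move=> y x z Rxy Ryz; have [|m [[m_xyz m_lb] _]] := Rwo (pred3 x y z).
  by exists x; rewrite inE eqxx.
move: m_xyz; rewrite inE => /or3P[] /eqP def_m; subst m.
- by apply: m_lb; rewrite inE eqxx !orbT.
- by rewrite (@Ranti x y) // Rxy m_lb // inE eqxx.
- by rewrite -(@Ranti y z) // Ryz m_lb // inE eqxx !orbT.
Qed.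

Lemma strict_well_order_of_well_order :
  strict_well_order T (fun x y => R x y && (x != y)).
Proof.
split; [|split; [|split]].
- by move=> x; rewrite eqxx andbF.
- move=> x y z /andP[Rxy nxy] /andP[Ryz _]; rewrite (@well_order_transitive y x z Rxy Ryz).
  by apply/eqP => exz; subst z; move/eqP: nxy; apply; apply: Ranti; rewrite Rxy.
- move=> x y; have [-> | _] := eqVneq x y; first by right; left.
  have /orP[Rxy | Ryx] := wo_chainW Rchain (x := x) (y := y) isT isT.
    by left; rewrite /= Rxy.
  by right; right; rewrite /= Ryx.
- move=> a; apply: contrapT => a_nacc.
  have [|z [[z_nacc z_lb] _]] := Rwo [pred x | `[< ~ Acc (fun x y => R x y && (x != y)) x >]].
    by exists a; rewrite inE; apply/asboolP.
  move: z_nacc; rewrite inE => /asboolP; apply; constructor => y /andP[Ryz nyz].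
  apply: contrapT => y_nacc; move/eqP: nyz; apply; apply: Ranti.
  by rewrite Ryz z_lb // inE; apply/asboolP.
Qed.

End StrictOfWellOrder.

Lemma strict_well_order_exists (T : Type) : exists R, strict_well_order T R.
Proof.
have [R Rwo] := well_ordering_principle {classic T}.
by eexists; apply: strict_well_order_of_well_order Rwo.
Qed.

Lemma strict_well_order_pullback (A B : Type) (f : A -> B) (R : B -> B -> Prop) :
  injective f -> strict_well_order B R ->
  strict_well_order A (fun x y => R (f x) (f y)).
Proof.
move=> f_inj [Rirr [Rtr [Rtri Rwf]]]; split; [|split; [|split]].
- by move=> x; apply: Rirr.
- by move=> x y z; apply: Rtr.
- move=> x y; have [Rxy | [/f_inj exy | Ryx]] := Rtri (f x) (f y); by auto.
- exact: wf_inverse_image.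
Qed.

Lemma well_founded_minimal (T : Type) (R : T -> T -> Prop) (P : T -> Prop) :
  well_founded R -> (exists x, P x) ->
  exists x, P x /\ forall y, R y x -> ~ P y.
Proof.
move=> Rwf [x Px]; apply: contrapT => no_min; move: Px.
elim/(well_founded_ind Rwf): x => x IHx Px; apply: no_min.
by exists x; split=> // y Ryx; apply: IHx.
Qed.

Lemma proj1_sig_inj (T : Type) (P : T -> Prop) : injective (@proj1_sig T P).
Proof. by move=> [x px] [y py] /= exy; apply: eq_exist. Qed.

Lemma card_le_trans (A B C : Type) : card_le A B -> card_le B C -> card_le A C.
Proof. by move=> [f f_inj] [g g_inj]; exists (g \o f) => x y /g_inj/f_inj. Qed.

Lemma card_le_sig (A B : Type) (P : A -> Prop) (Q : B -> Prop) (f : A -> B) :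
  injective f -> (forall a, P a -> Q (f a)) -> card_le {a | P a} {b | Q b}.
Proof.
move=> f_inj fPQ; exists (fun a => exist Q (f (proj1_sig a)) (fPQ _ (proj2_sig a))).
by move=> a b /(congr1 (@proj1_sig _ _))/f_inj/proj1_sig_inj.
Qed.

(* The initial ordinal of |V|: restrict an arbitrary well-order to the least
   initial segment into which V injects, and transport it back along that
   injection. *)
Lemma initial_well_order_exists (V : Type) : exists R : V -> V -> Prop,
  strict_well_order V R /\ forall v, ~ card_le V {x | R x v}.
Proof.
have [R0 R0wo] := strict_well_order_exists V.
have [small | big] := pselect (forall v, ~ card_le V {x | R0 x v}).
  by exists R0.
have [v0 [[g g_inj] v0_min]] : exists v0, card_le V {x | R0 x v0} /\
    forall y, R0 y v0 -> ~ card_le V {x | R0 x y}.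
  apply: well_founded_minimal; first by case: R0wo => _ [_ []].
  by apply: contrapT => none; apply: big => v Vv; apply: none; exists v.
pose h v := proj1_sig (g v).
have h_inj : injective h by move=> x y /proj1_sig_inj/g_inj.
exists (fun x y => R0 (h x) (h y)); split.
  exact: strict_well_order_pullback.
move=> v V_seg; apply: (v0_min (h v) (proj2_sig (g v))).
by apply: card_le_trans V_seg _; apply: card_le_sig h_inj _.
Qed.

Definition induced (G : graph) (S : vert G -> Prop) : graph :=
  @Graph {x | S x} (fun a b => adj G (proj1_sig a) (proj1_sig b))
    (fun a b => @adj_sym G _ _) (fun a => @adj_irrefl G _).

Lemma connected_in_induced (G : graph) (S : vert G -> Prop) (X : vert (induced G S) -> Prop) :
  connected_in (induced G S) X ->
  connected_in G (fun v => exists a, proj1_sig a = v /\ X a).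
Proof.
move=> Xconn _ _ [a [<- Xa]] [b [<- Xb]].
elim: (Xconn a b Xa Xb) => [x y [Xx [Xy xy]] | x | x y z _ IHxy _ IHyz].
- by apply: rt_step; split; [exists x | split; first exists y].
- exact: rt_refl.
- exact: rt_trans IHxy IHyz.
Qed.

Lemma induced_complete_minor (G : graph) (S : vert G -> Prop) (W : Type) :
  has_complete_minor (induced G S) W -> has_complete_minor G W.
Proof.
move=> [X [Xne [Xdisj [Xconn Xadj]]]].
exists (fun w v => exists a, proj1_sig a = v /\ X w a); split; [|split; [|split]].
- by move=> w; have [a Xa] := Xne w; exists (proj1_sig a), a.
- move=> w w' _ [a [<- Xa]] [b [/proj1_sig_inj ba Xb]].
  by apply: (Xdisj w w' a); rewrite // -ba.
- by move=> w; apply: connected_in_induced.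
- move=> w w' nww'; have [a [b [Xa [Xb ab]]]] := Xadj w w' nww'.
  by exists (proj1_sig a), (proj1_sig b); split; [exists a | split; first exists b].
Qed.

Lemma hc_minimal_induced_colorable (G : graph) (S : vert G -> Prop) :
  (forall H : graph, hc_candidate H -> card_le (vert G) (vert H)) ->
  ~ has_Komega1_minor G -> ~ card_le (vert G) {x | S x} ->
  exists c, proper_coloring (induced G S) nat c.
Proof.
move=> hc_min noK small; apply: contrapT => uncol; apply: small.
apply: (hc_min (induced G S)); split.
  by move=> c c_proper; apply: uncol; exists c.
by move=> [W [W_omega1 /induced_complete_minor W_minor]]; apply: noK; exists W.
Qed.

Definition proper_on (G : graph) (S : vert G -> Prop) (c : vert G -> nat) :=
  forall x y, S x -> S y -> adj G x y -> c x <> c y.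

Lemma proper_on_induced (G : graph) (S : vert G -> Prop) :
  (exists c, proper_coloring (induced G S) nat c) -> exists c, proper_on G S c.
Proof.
move=> [c c_proper].
exists (fun x => if pselect (S x) is left Sx then c (exist _ x Sx) else 0).
move=> x y Sx Sy xy; case: pselect => [Sx' | //]; case: pselect => [Sy' | //].
exact: c_proper.
Qed.

Lemma proper_on_setU1 (G : graph) (S : vert G -> Prop) (v : vert G) :
  (exists c, proper_on G S c) ->
  exists c, proper_on G (fun x => S x \/ x = v) c.
Proof.
move=> [c c_proper]; exists (fun x => if pselect (x = v) then 0 else (c x).+1).
move=> x y Sx Sy xy; case: pselect => [exv | nxv]; case: pselect => [eyv | nyv] //.
- by move=> _; apply: (adj_irrefl G v); rewrite -{1}exv -eyv.
- by move=> [/c_proper]; apply => //; [case: Sx | case: Sy].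
Qed.

Lemma colorable_of_countable_cover (G : graph) (S : nat -> vert G -> Prop) :
  (forall v, exists n, S n v) -> (forall n, exists c, proper_on G (S n) c) ->
  exists c, proper_coloring G nat c.
Proof.
move=> cover colorable; have [n Sn] := choice cover; have [c c_proper] := choice colorable.
exists (fun v => pickle (n v, c (n v) v)) => x y xy /(pcan_inj pickleK) [nxy cxy].
have Sy : S (n x) y by rewrite nxy.
by apply: (c_proper (n x) x y (Sn x) Sy xy); rewrite cxy nxy.
Qed.

Theorem mainTheorem3 :
  forall G : graph,
    hc_candidate G ->
    (forall H : graph, hc_candidate H -> card_le (vert G) (vert H)) ->
    uncountable_cofinality (vert G).
Proof.
move=> G [uncol noK] hc_min.
have [R [Rwo R_initial]] := initial_well_order_exists (vert G).
exists R; split=> //; split=> // f cofinal.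
have [c c_proper] : exists c, proper_coloring G nat c.
  apply: (@colorable_of_countable_cover G (fun n v => R v (f n) \/ v = f n) cofinal).
  move=> n; apply: proper_on_setU1; apply: proper_on_induced.
  exact: hc_minimal_induced_colorable.
exact: uncol c_proper.
Qed.
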